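(* Let $\mathcal{N}=\mathcal{N}_1\cup\mathcal{N}_2$ be a partition of a finite set of nodes (computing-bottleneck nodes $\mathcal{N}_1$, communication-bottleneck nodes $\mathcal{N}_2$), $B>0$, $\gamma\in(0,1]$, and $T_o$ a constant. For each $i$ let $a_i=q_ib_i+s_i$ and $P_i=k_ib_i+m_i$ be affine in the (real-valued) local batch size $b_i$, with $q_i+k_i>0$ for $i\in\mathcal{N}_1$ and $q_i+\gamma k_i>0$ for $i\in\mathcal{N}_2$. Consider the problem $$\min\ \mu\quad\text{s.t.}\quad a_i+P_i\le\mu\ (i\in\mathcal{N}_1),\quad a_i+\gamma P_i+T_o\le\mu\ (i\in\mathcal{N}_2),\quad \sum_{i\in\mathcal{N}}b_i=B.$$ Then at an optimal solution $\mu^*$, $a_i+P_i=\mu^*$ for all $i\in\mathcal{N}_1$ and $a_i+\gamma P_i+T_o=\mu^*$ for all $i\in\mathcal{N}_2$; i.e. all computing-bottleneck nodes have the same computing time $t_{compute}=a_i+P_i$, all communication-bottleneck nodes have the same first-bucket synchronization start $\mathit{syncStart}=a_i+\gamma P_i$, and $t_{compute}=\mathit{syncStart}+T_o$.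
   Context: Synchronous data-parallel training model: $a_i$ is the time for parameter update, data loading and forward propagation, $P_i$ the backpropagation time, $\gamma$ the overlap ratio, $T_o$ the synchronization time of all gradient buckets except the last, and $T_u$ that of the last bucket; the batch processing time is $\mu+T_u$, so minimizing $\mu$ minimizes batch processing time. *)

From mathcomp Require Import all_boot all_order all_algebra.
Set Implicit Arguments. Unset Strict Implicit. Unset Printing Implicit Defensive.
Import Order.TTheory GRing.Theory Num.Theory.
Local Open Scope ring_scope.

Section Model.
Variables (R : realFieldType) (T : finType) (N1 N2 : {set T}).
Variables (q s k m : T -> R) (gamma To B : R).

Definition a_time (b : T -> R) (i : T) : R := q i * b i + s i.
Definition P_time (b : T -> R) (i : T) : R := k i * b i + m i.

Definition feasible (mu : R) (b : T -> R) : Prop :=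
  (forall i, i \in N1 -> a_time b i + P_time b i <= mu) /\
  (forall i, i \in N2 -> a_time b i + gamma * P_time b i + To <= mu) /\
  \sum_(i : T) b i = B.

Definition optimal (mu : R) (b : T -> R) : Prop :=
  feasible mu b /\ forall mu' b', feasible mu' b' -> mu <= mu'.
End Model.

From mathcomp Require Import all_boot all_order all_algebra.
From mathcomp Require Import ring lra.
Set Implicit Arguments. Unset Strict Implicit. Unset Printing Implicit Defensive.
Import Order.TTheory GRing.Theory Num.Theory.
Local Open Scope ring_scope.

(* Every constraint has the form [c i * b i + d i <= mu] with a positive
   slope [c i]; the kind of bottleneck only decides which affine map node [i]
   carries.  At level [mu] node [i] can take at most [(mu - d i) / c i], and
   these capacities sum to [level mu], an increasing affine function of [mu].
   A feasible point forces [B <= level mu], while the level [mu0] solving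
   [level mu0 = B] is itself feasible with every constraint tight; minimality
   gives [mu <= mu0], hence [level mu = B = \sum_i b i], so no node can have
   slack. *)

Section AffineMinMax.
Variables (R : realFieldType) (I : finType) (c d : I -> R) (B : R).
Hypothesis c_gt0 : forall i, 0 < c i.

Definition minmax_feasible (mu : R) (b : I -> R) : Prop :=
  (forall i, c i * b i + d i <= mu) /\ \sum_i b i = B.

Definition capacity (mu : R) (i : I) : R := (mu - d i) / c i.

Definition level (mu : R) : R := \sum_i capacity mu i.

Lemma capacityK mu i : c i * capacity mu i + d i = mu.
Proof. by rewrite /capacity mulrC divfK ?gt_eqF ?c_gt0 //; ring. Qed.

Lemma le_capacity mu b i : c i * b i + d i <= mu -> b i <= capacity mu i.
Proof. by move=> le_mu; rewrite /capacity ler_pdivlMr ?c_gt0 // mulrC; lra. Qed.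

Lemma levelB x y : level x - level y = (x - y) * \sum_i (c i)^-1.
Proof.
rewrite /level -sumrB mulr_sumr; apply: eq_bigr => i _.
by rewrite /capacity; ring.
Qed.

Lemma level_onto (i0 : I) : exists mu0, level mu0 = B.
Proof.
have W_gt0 : 0 < \sum_i (c i)^-1.
  rewrite (bigD1 i0) //= ltr_pwDl ?invr_gt0 ?c_gt0 ?sumr_ge0 // => j _.
  by rewrite invr_ge0 ltW ?c_gt0.
exists ((B - level 0) / \sum_i (c i)^-1).
rewrite -[level _](subrK (level 0)) levelB subr0 divfK ?gt_eqF //.
by rewrite subrK.
Qed.

Lemma minmax_feasible_capacity {mu0} :
  level mu0 = B -> minmax_feasible mu0 (capacity mu0).
Proof. by move=> level_mu0; split=> // i; rewrite capacityK. Qed.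

Lemma minmax_feasible_le_level {mu b} : minmax_feasible mu b -> B <= level mu.
Proof.
by move=> [le_mu <-]; apply: ler_sum => i _; apply: le_capacity.
Qed.

Lemma minmax_optimal_tight mu b :
  minmax_feasible mu b ->
  (forall mu' b', minmax_feasible mu' b' -> mu <= mu') ->
  forall i, c i * b i + d i = mu.
Proof.
move=> feas opt i.
have [mu0 level_mu0] := level_onto i.
have le_mu_mu0 : mu <= mu0 := opt _ _ (minmax_feasible_capacity level_mu0).
have level_mu : level mu = \sum_j b j.
  apply/eqP; rewrite eq_le; apply/andP; split; last first.
    by rewrite feas.2 (minmax_feasible_le_level feas).
  rewrite feas.2 -level_mu0 -subr_le0 levelB.
  by rewrite mulr_le0_ge0 ?subr_le0 ?sumr_ge0 // => j _; rewrite invr_ge0 ltW.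
have slack_ge0 j : 0 <= capacity mu j - b j.
  by rewrite subr_ge0 le_capacity ?feas.1.
have no_slack : \sum_j (capacity mu j - b j) = 0.
  by rewrite sumrB -/(level mu) level_mu subrr.
have /eqP := psumr_eq0P (fun j _ => slack_ge0 j) no_slack (i := i) isT.
by rewrite subr_eq0 => /eqP <-; rewrite capacityK.
Qed.

End AffineMinMax.

Lemma partition_setC (T : finType) (A C : {set T}) :
  A :&: C = set0 -> A :|: C = [set: T] -> C = ~: A.
Proof.
move=> disj cover; apply/setP => i; rewrite in_setC.
move/setP/(_ i): disj; move/setP/(_ i): cover; rewrite !inE.
by case: (i \in A); case: (i \in C).
Qed.

Section BottleneckModel.
Variables (R : realFieldType) (T : finType) (N1 : {set T}).
Variables (q s k m : T -> R) (gamma To B : R).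

Definition slope (i : T) : R :=
  if i \in N1 then q i + k i else q i + gamma * k i.

Definition offset (i : T) : R :=
  if i \in N1 then s i + m i else s i + gamma * m i + To.

Lemma slope_offsetE (b : T -> R) i :
  slope i * b i + offset i =
  if i \in N1 then a_time q s b i + P_time k m b i
  else a_time q s b i + gamma * P_time k m b i + To.
Proof. by rewrite /slope /offset /a_time /P_time; case: ifP => _; ring. Qed.

Lemma feasibleE mu b :
  feasible N1 (~: N1) q s k m gamma To B mu b <->
  minmax_feasible slope offset B mu b.
Proof.
split=> [[le1 [le2 sumB]] | [le sumB]].
- split=> // i; rewrite slope_offsetE.
  by case: ifP => Ni; [apply: le1 | apply: le2; rewrite inE Ni].
- split; [|split] => // i Ni; have := le i; rewrite slope_offsetE.
    by rewrite Ni.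
  by move: Ni; rewrite inE => /negbTE ->.
Qed.

End BottleneckModel.

Theorem mainTheorem7 (R : realFieldType) (T : finType) (N1 N2 : {set T})
  (q s k m : T -> R) (gamma To B : R) (mu : R) (b : T -> R) :
  N1 :&: N2 = set0 -> N1 :|: N2 = [set: T] ->
  0 < B -> 0 < gamma -> gamma <= 1 ->
  (forall i, i \in N1 -> 0 < q i + k i) ->
  (forall i, i \in N2 -> 0 < q i + gamma * k i) ->
  optimal N1 N2 q s k m gamma To B mu b ->
  (forall i, i \in N1 -> a_time q s b i + P_time k m b i = mu) /\
  (forall i, i \in N2 -> a_time q s b i + gamma * P_time k m b i + To = mu).
Proof.
move=> disj cover _ _ _ slope1_gt0 slope2_gt0 [feas opt].
have N2E := partition_setC disj cover; subst N2.
have slope_gt0 i : 0 < slope N1 q k gamma i.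
  by rewrite /slope; case: ifP => Ni; [apply: slope1_gt0 | apply: slope2_gt0; rewrite inE Ni].
have opt' mu' b' :
    minmax_feasible (slope N1 q k gamma) (offset N1 s m gamma To) B mu' b' -> mu <= mu'.
  by move/feasibleE; apply: opt.
move/feasibleE: feas => feas.
have tight := minmax_optimal_tight slope_gt0 feas opt'.
split=> i Ni; have := tight i; rewrite slope_offsetE.
  by rewrite Ni.
by move: Ni; rewrite inE => /negbTE ->.
Qed.
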